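(* Let $n\ge 2$. The number of (unordered) pairs of disjoint matrices from $\Sigma_{n^2}$ is equal to the number of (unordered) pairs of disjoint matrices from $\Pi_n$.
   Context: A binary matrix is a matrix with all entries in $\{0,1\}$. An $n^2\times n^2$ binary matrix $A$ is partitioned into $n^2$ non-intersecting $n\times n$ blocks $A_{kl}$, $1\le k,l\le n$ (so $A=[A_{kl}]$). $A$ is an S-permutation matrix if each row, each column and each block of $A$ contains exactly one $1$; $\Sigma_{n^2}$ is the set of these. Two binary matrices $A=(a_{ij}),B=(b_{ij})$ of the same size are disjoint if there are no $i,j$ with $a_{ij}=b_{ij}=1$. $\Pi_n$ is the set of all $n\times n$ matrices whose entries are ordered pairs $\langle i,j\rangle$ with $i,j\in[n]=\{1,\dots,n\}$, such that in each row the first coordinates form a permutation of $[n]$ and in each column the second coordinates form a permutation of $[n]$. Two matrices $\pi'=[p'_{ij}],\pi''=[p''_{ij}]\in\Pi_n$ are disjoint if $p'_{ij}\ne p''_{ij}$ for all $i,j\in[n]$. *)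

From mathcomp Require Import all_boot all_algebra.
Set Implicit Arguments. Unset Strict Implicit. Unset Printing Implicit Defensive.

(* Indices are 0-based: 'I_(n*n) for rows/columns of an n^2 x n^2 matrix.
   Entry (i,j) lies in block (i %/ n, j %/ n). *)

Definition bmx (n : nat) := 'M[bool]_(n * n).

Definition is_Sperm (n : nat) (A : bmx n) : bool :=
  [&& [forall i, #|[set j | A i j]| == 1],
      [forall j, #|[set i | A i j]| == 1] &
      [forall k : 'I_n, forall l : 'I_n,
         #|[set p : 'I_(n * n) * 'I_(n * n) |
              [&& A p.1 p.2, p.1 %/ n == k & p.2 %/ n == l]]| == 1]].

Definition Sigma (n : nat) : {set bmx n} := [set A | is_Sperm A].

Definition bmx_disjoint (n : nat) (A B : bmx n) : bool :=
  [forall i, forall j, ~~ (A i j && B i j)].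

Definition pmx (n : nat) := 'M[('I_n * 'I_n)%type]_n.

Definition is_Pi (n : nat) (P : pmx n) : bool :=
  [forall i, [set (P i j).1 | j : 'I_n] == [set: 'I_n]] &&
  [forall j, [set (P i j).2 | i : 'I_n] == [set: 'I_n]].

Definition Pi (n : nat) : {set pmx n} := [set P | is_Pi P].

Definition pmx_disjoint (n : nat) (P Q : pmx n) : bool :=
  [forall i, forall j, P i j != Q i j].

Definition num_unordered_disjoint_pairs (T : finType) (S : {set T}) (disj : rel T)
  : nat :=
  #|[set U : {set T} | [&& U \subset S, #|U| == 2 &
       [forall x in U, forall y in U, (x != y) ==> disj x y]]]|.

From mathcomp Require Import all_boot all_algebra zify.
Set Implicit Arguments. Unset Strict Implicit. Unset Printing Implicit Defensive.

(* An S-permutation matrix A has exactly one 1 in each block A_kl; recording its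
   position <i,j> inside the block as the entry P_kl gives a matrix P.  A row of
   A crosses the blocks of one block row k at a fixed local row i, so it carries
   exactly one 1 iff exactly one entry of row k of P has first coordinate i;
   hence the row condition on A is the row condition of Pi_n, and likewise for
   columns.  Two such matrices share a 1 iff the corresponding P's share an
   entry, so this bijection Sigma_{n^2} -> Pi_n preserves disjointness. *)

Lemma forall_in_imset (aT rT : finType) (f : aT -> rT) (A : {set aT}) (P : pred rT) :
  [forall y in f @: A, P y] = [forall x in A, P (f x)].
Proof.
apply/forall_inP/forall_inP => [h x xA | h _ /imsetP[x xA ->]].
- exact: h (imset_f f xA).
- exact: h.
Qed.

Lemma subset_imset_inj (aT rT : finType) (f : aT -> rT) (A B : {set aT}) :
  injective f -> (f @: A \subset f @: B) = (A \subset B).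
Proof.
move=> f_inj; apply/idP/idP; last exact: imsetS.
move/subsetP=> sAB; apply/subsetP=> x xA.
by have /imsetP[y yB /f_inj ->] := sAB _ (imset_f f xA).
Qed.

Lemma imset_preimset (aT rT : finType) (f : aT -> rT) (A : {set aT}) (B : {set rT}) :
  B \subset f @: A -> B = f @: (f @^-1: B).
Proof.
move/subsetP=> sBA; apply/setP=> y; apply/idP/imsetP => [yB | [x + ->]].
- by have /imsetP[x _ exy] := sBA _ yB; exists x; rewrite // inE -exy.
- by rewrite inE.
Qed.

Lemma num_unordered_disjoint_pairs_imset (T1 T2 : finType) (g : T1 -> T2)
    (S : {set T1}) (d1 : rel T1) (d2 : rel T2) :
  injective g -> (forall x y, d2 (g x) (g y) = d1 x y) ->
  num_unordered_disjoint_pairs (g @: S) d2 = num_unordered_disjoint_pairs S d1.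
Proof.
move=> g_inj gd; rewrite /num_unordered_disjoint_pairs.
set pairs2 := [set U | _]; set pairs1 := [set U | _].
suff -> : pairs2 = [set g @: U | U : {set T1} in pairs1] by rewrite card_imset //; apply: imset_inj.
have pairs_imset (U : {set T1}) : (g @: U \in pairs2) = (U \in pairs1).
  rewrite !inE subset_imset_inj // card_imset // forall_in_imset.
  congr [&& _, _ & _]; apply: eq_forallb => x; congr (_ ==> _).
  rewrite forall_in_imset; apply: eq_forallb => y.
  by rewrite (inj_eq g_inj) gd.
apply/setP=> U; apply/idP/imsetP => [U_pair | [U1 + ->]]; last by rewrite pairs_imset.
have sUS : U \subset g @: S by move: U_pair; rewrite inE => /and3P[].
exists (g @^-1: U); last exact: imset_preimset sUS.
by rewrite -pairs_imset -(imset_preimset sUS).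
Qed.

Lemma cards1_setP (T : finType) (p : pred T) :
  reflect (exists x, forall y, p y = (y == x)) (#|[set y | p y]| == 1).
Proof.
apply: (iffP cards1P) => [[x e] | [x e]]; exists x.
- by move=> y; rewrite -in_set1 -e inE.
- by apply/setP=> y; rewrite !inE e.
Qed.

Lemma imset_eq_setT_fibers (T : finType) (f : T -> T) :
  ([set f x | x : T] == [set: T]) = [forall y, #|[set x | f x == y]| == 1].
Proof.
apply/eqP/forallP => [fT y | fibers].
- have f_inj : injective f.
    have /imset_injP f_inj : #|[set f x | x : T]| == #|T| by rewrite fT cardsT.
    by move=> x1 x2; apply: f_inj.
  have /imsetP[x _ ->] : y \in [set f x | x : T] by rewrite fT inE.
  by apply/cards1_setP; exists x => x'; rewrite (inj_eq f_inj).
- apply/setP=> y; rewrite inE; have [x /(_ x)] := cards1_setP _ (fibers y).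
  by rewrite eqxx => /eqP <-; apply: imset_f.
Qed.

Section BlockIndex.
Variable n : nat.
Implicit Types (r : 'I_(n * n)) (k i : 'I_n).

Lemma sq_index_gt0 r : 0 < n.
Proof. by have := ltn_ord r; nia. Qed.

Lemma blk_subproof r : r %/ n < n.
Proof. by rewrite ltn_divLR ?(sq_index_gt0 r). Qed.

Lemma off_subproof r : r %% n < n.
Proof. by rewrite ltn_pmod ?(sq_index_gt0 r). Qed.

Lemma idx_subproof k i : k * n + i < n * n.
Proof. by have := ltn_ord k; have := ltn_ord i; nia. Qed.

Definition blk r : 'I_n := Ordinal (blk_subproof r).
Definition off r : 'I_n := Ordinal (off_subproof r).
Definition idx k i : 'I_(n * n) := Ordinal (idx_subproof k i).

Lemma blk_idx k i : blk (idx k i) = k.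
Proof.
by apply/val_inj; rewrite /= divnMDl ?(sq_index_gt0 (idx k i)) // divn_small ?addn0.
Qed.

Lemma off_idx k i : off (idx k i) = i.
Proof. by apply/val_inj; rewrite /= modnMDl modn_small. Qed.

Lemma idx_blk_off r : idx (blk r) (off r) = r.
Proof. by apply/val_inj; rewrite /= -divn_eq. Qed.

Lemma eq_blk_off r r' : (r == r') = (blk r == blk r') && (off r == off r').
Proof.
apply/eqP/andP => [-> // | [/eqP eb /eqP eo]].
by rewrite -(idx_blk_off r) -(idx_blk_off r') eb eo.
Qed.

Lemma forall_idx (p : pred 'I_(n * n)) :
  [forall r, p r] = [forall k, forall i, p (idx k i)].
Proof.
apply/forallP/forallP => [h k | h r]; first by apply/forallP.
by rewrite -(idx_blk_off r); have /forallP := h (blk r).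
Qed.

End BlockIndex.

Section SpermOfPi.
Variable n : nat.
Implicit Types (P Q : pmx n) (A : bmx n) (r c : 'I_(n * n)) (k l i j : 'I_n).

Definition bmx_of_pmx P : bmx n :=
  (\matrix_(r, c) (P (blk r) (blk c) == (off r, off c)))%R.

Lemma bmx_of_pmxE P r c : bmx_of_pmx P r c = (P (blk r) (blk c) == (off r, off c)).
Proof. by rewrite mxE. Qed.

Lemma bmx_of_pmx_idx P k l i j : bmx_of_pmx P (idx k i) (idx l j) = (P k l == (i, j)).
Proof. by rewrite bmx_of_pmxE !blk_idx !off_idx. Qed.

Lemma bmx_of_pmx_inj : injective bmx_of_pmx.
Proof.
move=> P Q ePQ; apply/matrixP => k l.
have := bmx_of_pmx_idx Q k l (P k l).1 (P k l).2.
by rewrite -ePQ bmx_of_pmx_idx -surjective_pairing eqxx => /esym/eqP.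
Qed.

Lemma bmx_disjoint_of_pmx P Q :
  bmx_disjoint (bmx_of_pmx P) (bmx_of_pmx Q) = pmx_disjoint P Q.
Proof.
apply/forallP/forallP => disj k.
- apply/forallP => l; apply: contraNneq (forallP (disj (idx k (P k l).1)) (idx l (P k l).2)).
  by rewrite !bmx_of_pmx_idx => <-; rewrite -surjective_pairing eqxx.
- apply/forallP => c; rewrite !bmx_of_pmxE; apply: contraNN (forallP (disj (blk k)) (blk c)).
  by case/andP => /eqP -> /eqP ->.
Qed.

Lemma card_row_bmx_of_pmx P k i :
  #|[set c | bmx_of_pmx P (idx k i) c]| = #|[set l | (P k l).1 == i]|.
Proof.
have idx_inj : injective (fun l => idx l (P k l).2).
  by move=> l l' /(congr1 (@blk n)); rewrite !blk_idx.
rewrite -(card_imset _ idx_inj); apply: eq_card => c.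
rewrite inE bmx_of_pmxE blk_idx off_idx; apply/eqP/imsetP => [e | [l + ->]].
- by exists (blk c); rewrite ?inE e // idx_blk_off.
- by rewrite inE blk_idx off_idx => /eqP <-; case: (P k l).
Qed.

Lemma card_col_bmx_of_pmx P l j :
  #|[set r | bmx_of_pmx P r (idx l j)]| = #|[set k | (P k l).2 == j]|.
Proof.
have idx_inj : injective (fun k => idx k (P k l).1).
  by move=> k k' /(congr1 (@blk n)); rewrite !blk_idx.
rewrite -(card_imset _ idx_inj); apply: eq_card => r.
rewrite inE bmx_of_pmxE blk_idx off_idx; apply/eqP/imsetP => [e | [k + ->]].
- by exists (blk r); rewrite ?inE e // idx_blk_off.
- by rewrite inE blk_idx off_idx => /eqP <-; case: (P k l).
Qed.

Lemma block_bmx_of_pmx P k l :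
  [set p : 'I_(n * n) * 'I_(n * n) |
     [&& bmx_of_pmx P p.1 p.2, p.1 %/ n == k & p.2 %/ n == l]] =
  [set (idx k (P k l).1, idx l (P k l).2)].
Proof.
apply/setP => -[r c]; rewrite !inE /= bmx_of_pmxE xpair_eqE.
rewrite (eq_blk_off r) (eq_blk_off c) !blk_idx !off_idx.
have -> : (r %/ n == k) = (blk r == k) by []; have -> : (c %/ n == l) = (blk c == l) by [].
case: (blk r =P k) => [-> | _]; case: (blk c =P l) => [-> | _]; rewrite ?andbF //=.
by case: (P k l) => i j; rewrite xpair_eqE andbT !(eq_sym i) !(eq_sym j).
Qed.

Lemma is_Sperm_bmx_of_pmx P : is_Sperm (bmx_of_pmx P) = is_Pi P.
Proof.
have rows : [forall r, #|[set c | bmx_of_pmx P r c]| == 1] =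
            [forall k, [set (P k l).1 | l : 'I_n] == [set: 'I_n]].
  rewrite forall_idx; apply: eq_forallb => k; rewrite imset_eq_setT_fibers.
  by apply: eq_forallb => i; rewrite card_row_bmx_of_pmx.
have cols : [forall c, #|[set r | bmx_of_pmx P r c]| == 1] =
            [forall l, [set (P k l).2 | k : 'I_n] == [set: 'I_n]].
  rewrite forall_idx; apply: eq_forallb => l; rewrite imset_eq_setT_fibers.
  by apply: eq_forallb => j; rewrite card_col_bmx_of_pmx.
have blocks : [forall k : 'I_n, forall l : 'I_n,
    #|[set p : 'I_(n * n) * 'I_(n * n) |
         [&& bmx_of_pmx P p.1 p.2, p.1 %/ n == k & p.2 %/ n == l]]| == 1].
  by apply/forallP => k; apply/forallP => l; rewrite block_bmx_of_pmx cards1.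
by rewrite /is_Sperm rows cols blocks andbT.
Qed.

Definition pmx_of_bmx A : pmx n :=
  (\matrix_(k, l)
     if [pick p : 'I_(n * n) * 'I_(n * n) |
           [&& A p.1 p.2, (p.1 %/ n)%N == k & (p.2 %/ n)%N == l]] is Some p
     then (off p.1, off p.2) else (k, l))%R.

Lemma pmx_of_bmxK A : is_Sperm A -> bmx_of_pmx (pmx_of_bmx A) = A.
Proof.
case/and3P => _ _ /forallP blocks; apply/matrixP => r c.
have /forallP/(_ (blk c))/cards1_setP[x in_block] := blocks (blk r).
rewrite bmx_of_pmxE mxE; case: pickP => [p | /(_ x)]; last by rewrite in_block eqxx.
rewrite in_block => /eqP -> {p}.
have /and3P[_ /eqP blk_x1 /eqP blk_x2] : [&& A x.1 x.2, x.1 %/ n == blk r & x.2 %/ n == blk c].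
  by rewrite in_block.
have := in_block (r, c); rewrite /= !eqxx !andbT => ->.
rewrite xpair_eqE [(r, c) == x]xpair_eqE (eq_blk_off r) (eq_blk_off c).
have -> : blk x.1 = blk r by apply: val_inj.
have -> : blk x.2 = blk c by apply: val_inj.
by rewrite !eqxx (eq_sym (off r)) (eq_sym (off c)).
Qed.

Lemma Sigma_imset : Sigma n = bmx_of_pmx @: Pi n.
Proof.
apply/setP => A; rewrite inE; apply/idP/imsetP => [A_Sperm | [P + ->]].
- exists (pmx_of_bmx A); last by rewrite pmx_of_bmxK.
  by rewrite inE -is_Sperm_bmx_of_pmx pmx_of_bmxK.
- by rewrite inE is_Sperm_bmx_of_pmx.
Qed.

End SpermOfPi.

Theorem mainTheorem2 (n : nat) (hn : 2 <= n) :
  num_unordered_disjoint_pairs (Sigma n) (@bmx_disjoint n) =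
  num_unordered_disjoint_pairs (Pi n) (@pmx_disjoint n).
Proof.
rewrite Sigma_imset; apply: num_unordered_disjoint_pairs_imset.
- exact: bmx_of_pmx_inj.
- exact: bmx_disjoint_of_pmx.
Qed.
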